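(* Let $R$ be a commutative ring and $I$ an ideal of $R$ with $I\subseteq J(R)$. Then $R$ is locally stable if and only if $R/I$ is locally stable.
   Context: All rings are commutative with identity; $J(R)$ is the Jacobson radical. A ring $S$ has stable range 1 if whenever $aS+bS=S$ there is $y\in S$ with $a+by$ a unit. $S$ is locally stable if whenever $a,b\in S$ with $aS+bS=S$ there is $y\in S$ such that $S/(a+by)S$ has stable range 1. *)

(* Commutative rings with identity (possibly the zero ring)
   are modelled by [comPzRingType]. *)
From HB Require Import structures.
From mathcomp Require Import all_boot all_algebra.
Set Implicit Arguments. Unset Strict Implicit. Unset Printing Implicit Defensive.
Import GRing.Theory.
Local Open Scope ring_scope.

Definition is_unit (S : comPzRingType) (x : S) : Prop := exists y : S, x * y = 1.

(* I is an ideal of R (not required to be proper, not required decidable) *)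
Definition is_ideal (R : comPzRingType) (I : R -> Prop) : Prop :=
  [/\ I 0, (forall x y, I x -> I y -> I (x + y)) & (forall r x, I x -> I (r * x))].

Definition is_maximal_ideal (R : comPzRingType) (M : R -> Prop) : Prop :=
  [/\ is_ideal M, ~ M 1 &
      forall N : R -> Prop, is_ideal N -> (forall x, M x -> N x) ->
        N 1 \/ (forall x, N x -> M x)].

Definition jacobson (R : comPzRingType) (x : R) : Prop :=
  forall M : R -> Prop, is_maximal_ideal M -> M x.

(* q : R -> Q presents Q as the quotient ring R/K:
   q is a surjective ring morphism whose kernel is exactly K. *)
Definition is_quotient_map (R Q : comPzRingType) (q : {rmorphism R -> Q})
  (K : R -> Prop) : Prop :=
  (forall z : Q, exists x : R, q x = z) /\ (forall x : R, q x = 0 <-> K x).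

Definition comax (S : comPzRingType) (a b : S) : Prop :=
  exists u v : S, a * u + b * v = 1.

Definition stable_range1 (S : comPzRingType) : Prop :=
  forall a b : S, comax a b -> exists y : S, is_unit (a + b * y).

(* The quotient ring S/cS has stable range 1 (stated for every
   presentation of S/cS as a quotient of S). *)
Definition quotient_stable_range1 (S : comPzRingType) (c : S) : Prop :=
  forall (T : comPzRingType) (g : {rmorphism S -> T}),
    is_quotient_map g (fun x => exists s : S, x = c * s) -> stable_range1 T.

Definition locally_stable (S : comPzRingType) : Prop :=
  forall a b : S, comax a b -> exists y : S, quotient_stable_range1 (a + b * y).

From HB Require Import structures.
From mathcomp Require Import all_boot all_algebra.
From mathcomp Require Import boolp classical_sets ring.
Set Implicit Arguments. Unset Strict Implicit. Unset Printing Implicit Defensive.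
Import GRing.Theory.
Local Open Scope ring_scope.

(* Elements x of the Jacobson radical have 1 + x a unit (Krull's lemma), so
   modulo an ideal contained in the radical comaximal pairs and units lift.
   Hence pairs (a, b) and witnesses y move back and forth between R and
   Q = R/I, and for c = a + b y the ring Q/(q c) is the quotient of R/cR by the
   image of I, which lies in the radical of R/cR; stable range 1 is insensitive
   to quotients by ideals inside the radical. *)

Section IdealClosure.
Variables (S : comPzRingType) (K : S -> Prop).
Hypothesis K_ideal : is_ideal K.

Lemma ideal0 : K 0. Proof. by case: K_ideal. Qed.

Lemma idealD x y : K x -> K y -> K (x + y).
Proof. by case: K_ideal => _ + _; apply. Qed.

Lemma idealMl r x : K x -> K (r * x). Proof. by case: K_ideal => _ _; apply. Qed.

Lemma idealN x : K x -> K (- x). Proof. by rewrite -mulN1r; apply: idealMl. Qed.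

Lemma idealB x y : K x -> K y -> K (x - y).
Proof. by move=> Kx Ky; apply: idealD Kx (idealN Ky). Qed.

End IdealClosure.

Definition principal_ideal (S : comPzRingType) (c : S) : S -> Prop :=
  fun x => exists s, x = c * s.

Lemma principal_ideal_is_ideal (S : comPzRingType) (c : S) :
  is_ideal (principal_ideal c).
Proof.
split; first by exists 0; rewrite mulr0.
- by move=> _ _ [s ->] [t ->]; exists (s + t); rewrite mulrDr.
- by move=> r _ [s ->]; exists (r * s); rewrite mulrCA.
Qed.

Section MaximalIdeals.
Local Open Scope classical_set_scope.
Variable S : comPzRingType.

Lemma bigcup_ideal_chain (I : Type) (C : set I) (f : I -> set S) :
  C !=set0 -> (forall i, C i -> is_ideal (f i)) ->
  (forall i j, C i -> C j -> f i `<=` f j \/ f j `<=` f i) ->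
  is_ideal (\bigcup_(i in C) f i).
Proof.
move=> [i0 Ci0] C_ideal C_chain; split.
- by exists i0 => //; exact: ideal0 (C_ideal _ Ci0).
- move=> x y [i Ci fi_x] [j Cj fj_y].
  have [fij|fji] := C_chain _ _ Ci Cj.
  + by exists j => //; apply: (idealD (C_ideal _ Cj)) => //; apply: fij.
  + by exists i => //; apply: (idealD (C_ideal _ Ci)) => //; apply: fji.
- by move=> r x [i Ci fi_x]; exists i => //; exact: (idealMl (C_ideal _ Ci)) fi_x.
Qed.

Lemma exists_maximal_ideal_above (A : set S) :
  is_ideal A -> ~ A 1 -> exists M, is_maximal_ideal M /\ A `<=` M.
Proof.
move=> A_ideal A1.
pose proper_above (B : set S) := [/\ is_ideal B, ~ B 1 & A `<=` B].
pose T := {B : set S | proper_above B}.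
pose le (X Y : T) := `[< sval X `<=` sval Y >].
pose A_elt : T := exist _ A (And3 A_ideal A1 (@subset_refl _ A)).
have [M Mmax] : exists M : T, premaximal le M.
  apply: (ZL_preorder A_elt).
  - by move=> X; apply/asboolP.
  - by move=> X Y Z /asboolP XY /asboolP YZ; apply/asboolP/(subset_trans XY).
  move=> C C_chain; have [[X0 CX0]|C0] := pselect (exists X, C X); last first.
    by exists A_elt => X CX; case: C0; exists X.
  have U_proper : proper_above (\bigcup_(X in C) sval X).
    split.
    - apply: bigcup_ideal_chain => [|X _|X Y CX CY]; first by exists X0.
        by case: (svalP X).
      by have [/asboolP|/asboolP] := C_chain _ _ CX CY; [left|right].
    - by case=> X _; case: (svalP X).
    - by move=> x Ax; exists X0 => //; case: (svalP X0) => _ _; apply.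
  by exists (exist _ _ U_proper) => X CX; apply/asboolP => x Xx; exists X.
case: (svalP M) => M_ideal M1 AM; exists (sval M); split => //.
split => // N N_ideal MN; have [N1|N1] := pselect (N 1); [by left | right].
have N_elt : proper_above N by split => //; apply: subset_trans MN.
exact/asboolP/(Mmax (exist _ N N_elt))/asboolT.
Qed.

Lemma jacobson_unit (x : S) : jacobson x -> is_unit (1 + x).
Proof.
move=> Jx; apply: contrapT => x1_nonunit.
have x1_proper : ~ principal_ideal (1 + x) 1.
  by case=> s s1; apply: x1_nonunit; exists s.
have [M [M_max x1M]] :=
  exists_maximal_ideal_above (principal_ideal_is_ideal (1 + x)) x1_proper.
case: (M_max) => M_ideal M1 _; apply: M1.
rewrite -(addrK x 1); apply: (idealB M_ideal); last exact: Jx.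
by apply: x1M; exists 1; rewrite mulr1.
Qed.

End MaximalIdeals.

(* MathComp's [{ideal_quot I}] needs a decidable proper ideal of a nontrivial
   ring; principal ideals [cR] may be neither, so the quotient is built here. *)
Section IdealQuotient.
Local Open Scope quotient_scope.
Variables (S : comPzRingType) (K : S -> Prop).
Hypothesis K_ideal : is_ideal K.

Definition ideal_equiv (x y : S) : bool := `[< K (x - y) >].

Lemma ideal_equiv_refl : reflexive ideal_equiv.
Proof. by move=> x; apply/asboolP; rewrite subrr; apply: ideal0. Qed.

Lemma ideal_equiv_sym : symmetric ideal_equiv.
Proof.
by move=> x y; apply/asboolP/asboolP => /(idealN K_ideal); rewrite opprB.
Qed.

Lemma ideal_equiv_trans : transitive ideal_equiv.
Proof.
move=> y x z /asboolP Kxy /asboolP Kyz; apply/asboolP.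
by rewrite -(subrKA y); apply: (idealD K_ideal).
Qed.

Canonical ideal_equiv_rel :=
  EquivRel ideal_equiv ideal_equiv_refl ideal_equiv_sym ideal_equiv_trans.

Definition quot_ring := {eq_quot ideal_equiv}.
HB.instance Definition _ := Choice.on quot_ring.

Definition quot_proj (x : S) : quot_ring := \pi x.

Lemma quot_projP x y : quot_proj x = quot_proj y <-> K (x - y).
Proof. by split => [/eqmodP/asboolP | Kxy]; last exact/eqmodP/asboolP. Qed.

Lemma quot_projK (z : quot_ring) : quot_proj (repr z) = z.
Proof. exact: reprK. Qed.

Lemma quot_projW (P : quot_ring -> Prop) :
  (forall x, P (quot_proj x)) -> forall z, P z.
Proof. by move=> Pproj z; rewrite -(quot_projK z). Qed.

Lemma repr_quot_proj x : K (repr (quot_proj x) - x).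
Proof. by apply/quot_projP; rewrite quot_projK. Qed.

Definition quot_add (a b : quot_ring) := quot_proj (repr a + repr b).
Definition quot_opp (a : quot_ring) := quot_proj (- repr a).
Definition quot_mul (a b : quot_ring) := quot_proj (repr a * repr b).

Lemma quot_projD x y : quot_proj (x + y) = quot_add (quot_proj x) (quot_proj y).
Proof.
apply/quot_projP; move: (repr_quot_proj x) (repr_quot_proj y).
move: (repr (quot_proj x)) (repr (quot_proj y)) => x' y' Kx Ky.
have -> : x + y - (x' + y') = - ((x' - x) + (y' - y)) by ring.
exact: (idealN K_ideal) (idealD K_ideal Kx Ky).
Qed.

Lemma quot_projN x : quot_proj (- x) = quot_opp (quot_proj x).
Proof. by apply/quot_projP; rewrite opprK addrC; apply: repr_quot_proj. Qed.

Lemma quot_projM x y : quot_proj (x * y) = quot_mul (quot_proj x) (quot_proj y).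
Proof.
apply/quot_projP; move: (repr_quot_proj x) (repr_quot_proj y).
move: (repr (quot_proj x)) (repr (quot_proj y)) => x' y' Kx Ky.
have -> : x * y - x' * y' = - (y' * (x' - x) + x * (y' - y)) by ring.
apply: (idealN K_ideal); apply: (idealD K_ideal); exact: (idealMl K_ideal).
Qed.

Lemma quot_addA : associative quot_add.
Proof.
by elim/quot_projW => x; elim/quot_projW => y; elim/quot_projW => z;
  rewrite -!quot_projD addrA.
Qed.

Lemma quot_addC : commutative quot_add.
Proof. by elim/quot_projW => x; elim/quot_projW => y; rewrite -!quot_projD addrC. Qed.

Lemma quot_add0 : left_id (quot_proj 0) quot_add.
Proof. by elim/quot_projW => x; rewrite -quot_projD add0r. Qed.

Lemma quot_addN : left_inverse (quot_proj 0) quot_opp quot_add.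
Proof. by elim/quot_projW => x; rewrite -quot_projN -quot_projD addNr. Qed.

HB.instance Definition _ :=
  GRing.isZmodule.Build quot_ring quot_addA quot_addC quot_add0 quot_addN.

Lemma quot_mulA : associative quot_mul.
Proof.
by elim/quot_projW => x; elim/quot_projW => y; elim/quot_projW => z;
  rewrite -!quot_projM mulrA.
Qed.

Lemma quot_mulC : commutative quot_mul.
Proof. by elim/quot_projW => x; elim/quot_projW => y; rewrite -!quot_projM mulrC. Qed.

Lemma quot_mul1 : left_id (quot_proj 1) quot_mul.
Proof. by elim/quot_projW => x; rewrite -quot_projM mul1r. Qed.

Lemma quot_mulDl : left_distributive quot_mul quot_add.
Proof.
by elim/quot_projW => x; elim/quot_projW => y; elim/quot_projW => z;
  rewrite -quot_projD -!quot_projM -quot_projD mulrDl.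
Qed.

HB.instance Definition _ :=
  GRing.Zmodule_isComPzRing.Build quot_ring quot_mulA quot_mulC quot_mul1 quot_mulDl.

Lemma quot_proj_is_zmod_morphism : zmod_morphism quot_proj.
Proof. by move=> x y; rewrite quot_projD quot_projN. Qed.

HB.instance Definition _ :=
  GRing.isZmodMorphism.Build S quot_ring quot_proj quot_proj_is_zmod_morphism.

Lemma quot_proj_is_monoid_morphism : monoid_morphism quot_proj.
Proof. by split => // x y; rewrite quot_projM. Qed.

HB.instance Definition _ :=
  GRing.isMonoidMorphism.Build S quot_ring quot_proj quot_proj_is_monoid_morphism.

Lemma quot_proj_is_quotient_map : is_quotient_map quot_proj K.
Proof.
split => [z|x]; first by exists (repr z); apply: quot_projK.
by rewrite -(rmorph0 quot_proj) quot_projP subr0.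
Qed.

End IdealQuotient.

Lemma exists_quotient_map (S : comPzRingType) (K : S -> Prop) :
  is_ideal K -> exists (T : comPzRingType) (g : {rmorphism S -> T}),
    is_quotient_map g K.
Proof.
move=> K_ideal; exists (quot_ring K_ideal), (quot_proj K_ideal).
exact: quot_proj_is_quotient_map.
Qed.

Lemma comax_rmorph (S T : comPzRingType) (f : {rmorphism S -> T}) (a b : S) :
  comax a b -> comax (f a) (f b).
Proof.
by case=> u [v abuv]; exists (f u), (f v); rewrite -!rmorphM -rmorphD abuv rmorph1.
Qed.

(* [h] factors through [g], and the kernel of the induced map [T -> U] lies in
   the Jacobson radical of [T]; the induced map itself is never constructed. *)
Section StableRangeTransfer.
Variables (S T U : comPzRingType).
Variables (g : {rmorphism S -> T}) (h : {rmorphism S -> U}).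
Hypothesis g_surj : forall t, exists x, g x = t.
Hypothesis h_surj : forall u, exists x, h x = u.
Hypothesis ker_g_sub : forall x, g x = 0 -> h x = 0.
Hypothesis ker_h_unit : forall x, h x = 0 -> is_unit (g (1 + x)).

Lemma rmorph_eq_transfer x y : g x = g y -> h x = h y.
Proof.
move=> /eqP; rewrite -subr_eq0 -rmorphB => /eqP/ker_g_sub/eqP.
by rewrite rmorphB subr_eq0 => /eqP.
Qed.

Lemma rmorph_eq1_lift x : h x = 1 -> is_unit (g x).
Proof.
move=> /eqP; rewrite -subr_eq0 -(rmorph1 h) -rmorphB => /eqP/ker_h_unit.
by rewrite addrC subrK.
Qed.

Lemma is_unit_transfer x : is_unit (g x) -> is_unit (h x).
Proof.
case=> t; have [z <-] := g_surj t.
rewrite -rmorphM -(rmorph1 g) => /rmorph_eq_transfer xz.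
by exists (h z); rewrite -rmorphM xz rmorph1.
Qed.

Lemma is_unit_lift x : is_unit (h x) -> is_unit (g x).
Proof.
case=> t; have [z <-] := h_surj t; rewrite -rmorphM => /rmorph_eq1_lift.
by rewrite rmorphM => -[k xzk]; exists (g z * k); rewrite mulrA.
Qed.

Lemma comax_transfer a b : comax (g a) (g b) -> comax (h a) (h b).
Proof.
case=> u' [v']; have [u <-] := g_surj u'; have [v <-] := g_surj v'.
rewrite -!rmorphM -rmorphD -(rmorph1 g) => /rmorph_eq_transfer.
by rewrite rmorphD !rmorphM rmorph1 => abuv; exists (h u), (h v).
Qed.

Lemma comax_lift a b : comax (h a) (h b) -> comax (g a) (g b).
Proof.
case=> u' [v']; have [u <-] := h_surj u'; have [v <-] := h_surj v'.
rewrite -!rmorphM -rmorphD => /rmorph_eq1_lift [k abuvk].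
by exists (g u * k), (g v * k); rewrite !mulrA -mulrDl -!rmorphM -rmorphD.
Qed.

Lemma stable_range1_transfer : stable_range1 T <-> stable_range1 U.
Proof.
split=> sr1 a' b'.
- have [a <-] := h_surj a'; have [b <-] := h_surj b' => /comax_lift/sr1 [y'].
  have [y <-] := g_surj y'; rewrite -rmorphM -rmorphD => /is_unit_transfer aby.
  by exists (h y); rewrite -rmorphM -rmorphD.
- have [a <-] := g_surj a'; have [b <-] := g_surj b' => /comax_transfer/sr1 [y'].
  have [y <-] := h_surj y'; rewrite -rmorphM -rmorphD => /is_unit_lift aby.
  by exists (g y); rewrite -rmorphM -rmorphD.
Qed.

End StableRangeTransfer.

Section LocalStabilityModuloRadical.
Variables (R Q : comPzRingType) (q : {rmorphism R -> Q}).
Hypothesis q_surj : forall z, exists x, q x = z.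
Hypothesis ker_q_unit : forall x, q x = 0 -> is_unit (1 + x).

Lemma comax_lift_quotient a b : comax (q a) (q b) -> comax a b.
Proof. exact: (comax_lift (g := idfun)). Qed.

Lemma stable_range1_principal_quotients (c : R) (T U : comPzRingType)
    (g : {rmorphism R -> T}) (h : {rmorphism Q -> U}) :
  is_quotient_map g (principal_ideal c) ->
  is_quotient_map h (principal_ideal (q c)) ->
  stable_range1 T <-> stable_range1 U.
Proof.
move=> [g_surj ker_g] [h_surj ker_h].
apply: (stable_range1_transfer (h := h \o q)) => // [u|x|x].
- by have [z <-] := h_surj u; have [x <-] := q_surj z; exists x.
- by case/ker_g=> s -> /=; rewrite rmorphM; apply/ker_h; exists (q s).
case/ker_h=> t qx; have [s qs] := q_surj t.
have [k xk] : is_unit (1 + (x - c * s)).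
  by apply: ker_q_unit; rewrite rmorphB rmorphM qs qx subrr.
have -> : g (1 + x) = g (1 + (x - c * s)).
  apply/eqP; rewrite -subr_eq0 -rmorphB; apply/eqP/ker_g; exists s; ring.
by exists (g k); rewrite -rmorphM xk rmorph1.
Qed.

Lemma quotient_stable_range1_transfer (c : R) :
  quotient_stable_range1 c <-> quotient_stable_range1 (q c).
Proof.
split=> sr1 T g g_quot.
- have [T' [g' g'_quot]] := exists_quotient_map (principal_ideal_is_ideal c).
  exact/(stable_range1_principal_quotients g'_quot g_quot)/(sr1 _ _ g'_quot).
- have [U [h h_quot]] := exists_quotient_map (principal_ideal_is_ideal (q c)).
  exact/(stable_range1_principal_quotients g_quot h_quot)/(sr1 _ _ h_quot).
Qed.

Lemma locally_stable_quotient : locally_stable R <-> locally_stable Q.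
Proof.
split=> ls a' b'.
- have [a <-] := q_surj a'; have [b <-] := q_surj b'.
  move=> /comax_lift_quotient/ls [y sr1]; exists (q y).
  by rewrite -rmorphM -rmorphD; apply/quotient_stable_range1_transfer.
- move=> /(comax_rmorph q)/ls [y' sr1]; have [y qy] := q_surj y'.
  by exists y; apply/quotient_stable_range1_transfer; rewrite rmorphD rmorphM qy.
Qed.

End LocalStabilityModuloRadical.

Theorem proposition2p5 (R : comPzRingType) (I : R -> Prop)
  (Q : comPzRingType) (q : {rmorphism R -> Q}) :
  is_ideal I -> (forall x, I x -> jacobson x) -> is_quotient_map q I ->
  (locally_stable R <-> locally_stable Q).
Proof.
(* [is_ideal I] is implied by [I] being the kernel of [q]. *)
move=> _ I_jacobson [q_surj ker_q]; apply: locally_stable_quotient => // x.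
by move=> /ker_q/I_jacobson/jacobson_unit.
Qed.
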